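(* Let $\mathbf k$ be a commutative domain of characteristic zero and let $\omega=xy-(\phi(x)+y\psi(x))$ with $\phi,\psi\in\mathbf k[x]$ both nonzero. Then there exists a commutative Rota-Baxter algebra $(R,P)$ of weight $0$ such that the $\omega$-cover $\widetilde P$ of $P$ on $R^{\mathbb N}$ (weight-$0$ Hurwitz product) is not a Rota-Baxter operator of weight $0$.
   Context: A Rota-Baxter operator of weight $0$ on an algebra $A$ is a $\mathbf{k}$-linear $P$ with $P(x)P(y)=P(P(x)y)+P(xP(y))$. $R^{\mathbb N}$ is the set of sequences $(f_n)_{n\in\mathbb N}$ in $R$ with product $(fg)_n=\sum_{j=0}^n\binom{n}{j}f_{n-j}g_j$, and $(\partial_R f)_n=f_{n+1}$. For $\phi=\sum_{i=0}^r a_ix^i$, $\psi=\sum_{j=0}^s b_jx^j$, the $\omega$-cover $\widetilde P$ of $P$ is the unique linear operator on $R^{\mathbb N}$ with $\widetilde P_0(f)=P(f_0)$ and $\widetilde P_n(f)=\sum_{i=0}^r a_if_{n-1+i}+\sum_{j=0}^s b_j\widetilde P_{n-1}(\partial_R^jf)$ for $n\ge1$, where $\widetilde P_n(f):=\widetilde P(f)_n$. *)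

From HB Require Import structures.
From mathcomp Require Import all_boot all_order all_algebra.
Set Implicit Arguments. Unset Strict Implicit. Unset Printing Implicit Defensive.
Import Order.TTheory GRing.Theory Num.Theory.
Local Open Scope ring_scope.

Definition is_RB0 (k : comNzRingType) (A : comAlgType k) (P : {linear A -> A}) : Prop :=
  forall x y : A, P x * P y = P (P x * y) + P (x * P y).

Definition hurwitz_mul (R : comNzRingType) (f g : nat -> R) : nat -> R :=
  fun n => \sum_(j < n.+1) (f (n - j)%N * g j) *+ 'C(n, j).

(* derivation: (d f)_n = f_{n+1}; iterated j times: (d^j f)_n = f_{n+j} *)
Definition hshift (R : Type) (j : nat) (f : nat -> R) : nat -> R :=
  fun m => f (m + j)%N.

Fixpoint omega_cover_n (k : comNzRingType) (A : comAlgType k)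
    (phi psi : {poly k}) (P : A -> A) (n : nat) (f : nat -> A) : A :=
  match n with
  | 0 => P (f 0%N)
  | n'.+1 => \sum_(i < size phi) phi`_i *: f (n' + i)%N
             + \sum_(j < size psi) psi`_j *: omega_cover_n phi psi P n' (hshift j f)
  end.

Definition omega_cover (k : comNzRingType) (A : comAlgType k)
    (phi psi : {poly k}) (P : A -> A) (f : nat -> A) : nat -> A :=
  fun n => omega_cover_n phi psi P n f.

Definition is_RB0_seq (R : comNzRingType) (Q : (nat -> R) -> (nat -> R)) : Prop :=
  forall (f g : nat -> R) (n : nat),
    hurwitz_mul (Q f) (Q g) n = Q (hurwitz_mul (Q f) g) n + Q (hurwitz_mul f (Q g)) n.

(* Take R = k with P = 0, which is trivially Rota-Baxter; its cover satisfies
   Q_0 f = 0 and Q_(n+1) f = sum_i a_i f_(n+i) + sum_j b_j Q_n (d^j f).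
   Testing the Rota-Baxter identity on the Hurwitz unit sequences delta_m, in
   low degree, exposes a defect that is a product of nonzero coefficients of
   phi and psi with a positive integer: with r = deg phi, s = deg psi, use
   (delta_r, delta_(r-1)) in degree 1 when r > 0, and for constant phi
   (delta_0, delta_0) in degree 3 (s = 0) or 2 (s = 1), and
   (delta_s, delta_(s-2)) in degree 2 (s >= 2). *)

From HB Require Import structures.
From mathcomp Require Import all_boot all_order all_algebra.
From mathcomp Require Import zify ring.
Import GRing.Theory.
Local Open Scope ring_scope.

Definition delta (R : comNzRingType) (m : nat) : nat -> R :=
  fun i => if i == m then 1 else 0.

Lemma big_ord_only1 (R : zmodType) n (F : nat -> R) m : (m < n)%N ->
  (forall l, (l < n)%N -> l != m -> F l = 0) -> \sum_(l < n) F l = F m.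
Proof.
move=> lt_mn F0; rewrite (big_only1 (Ordinal lt_mn)) // => j neq_jm _.
by apply: F0 => //; apply: contra neq_jm => /eqP eq_jm; apply/eqP/val_inj.
Qed.

Section Hurwitz.
Variable R : comNzRingType.
Implicit Types f g : nat -> R.

Lemma hurwitz_mulC f g : hurwitz_mul f g =1 hurwitz_mul g f.
Proof.
move=> n; rewrite /hurwitz_mul (reindex_inj rev_ord_inj) /=.
apply: eq_bigr => j _; have le_jn : (j <= n)%N by rewrite -ltnS.
by rewrite subKn // bin_sub // mulrC.
Qed.

Lemma hurwitz_mul_delta_r f m i :
  hurwitz_mul f (delta R m) i = if (m <= i)%N then f (i - m)%N *+ 'C(i, m) else 0.
Proof.
rewrite /hurwitz_mul; case: leqP => [le_mi | lt_im].
- rewrite (@big_ord_only1 _ _ (fun j => (f (i - j)%N * delta R m j) *+ 'C(i, j)) m) //.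
    by rewrite /delta eqxx mulr1.
  by move=> l _ /negbTE neq_lm; rewrite /delta neq_lm mulr0 mul0rn.
- rewrite big1 // => l _; rewrite /delta ifF ?mulr0 ?mul0rn //.
  by apply/negbTE/eqP => eq_lm; have := ltn_ord l; lia.
Qed.

Lemma hurwitz_mul_delta_l f m i :
  hurwitz_mul (delta R m) f i = if (m <= i)%N then f (i - m)%N *+ 'C(i, m) else 0.
Proof. by rewrite hurwitz_mulC hurwitz_mul_delta_r. Qed.

Lemma hurwitz_mul_delta0_r f : hurwitz_mul f (delta R 0) =1 f.
Proof. by move=> i; rewrite hurwitz_mul_delta_r subn0 bin0. Qed.

Lemma hurwitz_mul_delta0_l f : hurwitz_mul (delta R 0) f =1 f.
Proof. by move=> i; rewrite hurwitz_mulC hurwitz_mul_delta0_r. Qed.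

Lemma hurwitz_mul1 f g : hurwitz_mul f g 1 = f 1%N * g 0%N + f 0%N * g 1%N.
Proof. by rewrite /hurwitz_mul !big_ord_recl big_ord0 addr0. Qed.

Lemma hurwitz_mul2 f g :
  hurwitz_mul f g 2 = f 2%N * g 0%N + f 1%N * g 1%N *+ 2 + f 0%N * g 2%N.
Proof. by rewrite /hurwitz_mul !big_ord_recl big_ord0 addr0 addrA. Qed.

Lemma hurwitz_mul3 f g : hurwitz_mul f g 3 =
  f 3%N * g 0%N + f 2%N * g 1%N *+ 3 + f 1%N * g 2%N *+ 3 + f 0%N * g 3%N.
Proof. by rewrite /hurwitz_mul !big_ord_recl big_ord0 addr0 !addrA. Qed.

End Hurwitz.

Lemma coef_lead_neq0 (R : nzRingType) (p : {poly R}) :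
  (0 < size p)%N -> p`_(size p).-1 != 0.
Proof. by rewrite -lead_coefE lead_coef_eq0 size_poly_gt0. Qed.

Lemma is_RB0_zero (k : comNzRingType) (A : comAlgType k) :
  is_RB0 (\0 : {linear A -> A}).
Proof. by move=> x y; rewrite /= mulr0 addr0. Qed.

Section ZeroCover.
Variable k : idomainType.
Hypothesis hchar : [pchar k] =i pred0.
Variables phi psi : {poly k}.

Notation Q := (omega_cover phi psi (\0 : {linear k^o -> k^o})).

Lemma zcover0 f : Q f 0 = 0.
Proof. by []. Qed.

Lemma zcoverS f n : Q f n.+1 = \sum_(i < size phi) phi`_i * f (n + i)%N
   + \sum_(j < size psi) psi`_j * Q (hshift j f) n.
Proof. by []. Qed.

Lemma zcover1 f : Q f 1 = \sum_(i < size phi) phi`_i * f i.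
Proof.
rewrite zcoverS [X in _ + X]big1 ?addr0 => [|j _]; last by rewrite zcover0 mulr0.
by apply: eq_bigr => i _; rewrite add0n.
Qed.

Lemma natr_neq0 n : (0 < n)%N -> (n%:R : k) != 0.
Proof. by move=> n_gt0; rewrite (proj1 (pcharf0P k) hchar) -lt0n. Qed.

Lemma not_RB0_zcover_phi_nonconst : (1 < size phi)%N -> ~ is_RB0_seq Q.
Proof.
move=> phi_gt1 RB; set r := (size phi).-1.
have size_phi : size phi = r.+1 by rewrite /r; lia.
have lead_neq0 : phi`_r != 0 by apply: coef_lead_neq0; rewrite size_phi.
have Q1_deltar : Q (delta k r) 1 = phi`_r.
  rewrite zcover1 (@big_ord_only1 _ _ (fun i => phi`_i * delta k r i) r).
  - by rewrite /delta eqxx mulr1.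
  - by rewrite size_phi.
  by move=> l _ /negbTE neq_lr; rewrite /delta neq_lr mulr0.
move: (RB (delta k r) (delta k r.-1) 1%N).
rewrite hurwitz_mul1 !zcover0 mulr0 mul0r addr0 !zcover1.
rewrite [X in _ = _ + X]big1 => [|l _]; last first.
  rewrite hurwitz_mul_delta_l; case: ifP => _; last by rewrite mulr0.
  by rewrite (_ : (l - r = 0)%N) ?zcover0 ?mul0rn ?mulr0 //; apply/eqP;
    rewrite subn_eq0 -ltnS -size_phi.
rewrite (@big_ord_only1 _ _
   (fun i => phi`_i * hurwitz_mul (Q (delta k r)) (delta k r.-1) i) r); first last.
- move=> l; rewrite size_phi => lt_lr /eqP neq_lr; rewrite hurwitz_mul_delta_r.
  case: ifP => _; last by rewrite mulr0.
  by rewrite (_ : (l - r.-1 = 0)%N) ?zcover0 ?mul0rn ?mulr0 //; lia.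
- by rewrite size_phi.
have r_sub : (r - r.-1 = 1)%N by lia.
rewrite hurwitz_mul_delta_r ifT; last by lia.
rewrite r_sub Q1_deltar addr0 -bin_sub ?leq_pred // r_sub bin1.
move/esym/eqP; rewrite -mulr_natr; apply/negP.
by rewrite !mulf_neq0 // natr_neq0; lia.
Qed.

Section ConstantPhi.
Hypothesis size_phi : size phi = 1%N.
Let a := phi`_0.

Lemma a_neq0 : a != 0.
Proof. by have := @coef_lead_neq0 _ phi; rewrite size_phi; apply. Qed.

Lemma zcoverS_phiC f n :
  Q f n.+1 = a * f n + \sum_(j < size psi) psi`_j * Q (hshift j f) n.
Proof. by rewrite zcoverS size_phi big_ord1 addn0. Qed.

Lemma zcover1_phiC f : Q f 1 = a * f 0%N.
Proof. by rewrite zcover1 size_phi big_ord1. Qed.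

Lemma zcover2_phiC f :
  Q f 2 = a * f 1%N + \sum_(j < size psi) psi`_j * (a * f j).
Proof.
by rewrite zcoverS_phiC; congr (_ + _); apply: eq_bigr => j _; rewrite zcover1_phiC.
Qed.

Lemma not_RB0_zcover_psi_const : size psi = 1%N -> ~ is_RB0_seq Q.
Proof.
move=> size_psi RB; set b := psi`_0.
have b_neq0 : b != 0 by have := @coef_lead_neq0 _ psi; rewrite size_psi; apply.
have Q3 f : Q f 3 = a * f 2%N + b * (a * f 1%N + b * (a * f 0%N)).
  by rewrite zcoverS_phiC size_psi big_ord1 zcover2_phiC size_psi big_ord1.
set q := Q (delta k 0).
have [q0 q1 q2 q3] : [/\ q 0%N = 0, q 1%N = a, q 2%N = b * a & q 3%N = b * b * a].
  rewrite /q !Q3 zcover1_phiC zcover2_phiC size_psi big_ord1 /delta /=.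
  by split; rewrite ?mulr0 ?mulr1 ?add0r ?mulrA.
move/eqP: (RB (delta k 0) (delta k 0) 3); rewrite -/q.
rewrite hurwitz_mul3 !Q3 !hurwitz_mul_delta0_l !hurwitz_mul_delta0_r q0 q1 q2 q3.
rewrite -subr_eq0 (_ : _ - _ = a * a * b * 2%:R); last by ring.
by apply/negP; rewrite !mulf_neq0 ?a_neq0 ?natr_neq0.
Qed.

Lemma not_RB0_zcover_psi_linear : size psi = 2%N -> ~ is_RB0_seq Q.
Proof.
move=> size_psi RB; set b0 := psi`_0; set b1 := psi`_1.
have b1_neq0 : b1 != 0 by have := @coef_lead_neq0 _ psi; rewrite size_psi; apply.
have Q2 f : Q f 2 = a * f 1%N + (b0 * (a * f 0%N) + b1 * (a * f 1%N)).
  by rewrite zcover2_phiC size_psi !big_ord_recl big_ord0 addr0.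
set q := Q (delta k 0).
have [q0 q1 q2] : [/\ q 0%N = 0, q 1%N = a & q 2%N = b0 * a].
  rewrite /q Q2 zcover1_phiC /delta /=.
  by split; rewrite ?mulr0 ?mulr1 ?add0r ?addr0.
move/eqP: (RB (delta k 0) (delta k 0) 2); rewrite -/q eq_sym.
rewrite hurwitz_mul2 !Q2 !hurwitz_mul_delta0_l !hurwitz_mul_delta0_r q0 q1 q2.
rewrite -subr_eq0 (_ : _ - _ = a * a * b1 * 2%:R); last by ring.
by apply/negP; rewrite !mulf_neq0 ?a_neq0 ?natr_neq0.
Qed.

Lemma not_RB0_zcover_psi_nonlinear : (2 < size psi)%N -> ~ is_RB0_seq Q.
Proof.
move=> psi_gt2 RB; set s := (size psi).-1.
have size_psi : size psi = s.+1 by rewrite /s; lia.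
have b_neq0 : psi`_s != 0 by apply: coef_lead_neq0; rewrite size_psi.
set Qf := Q (delta k s); set Qg := Q (delta k (s - 2)).
have [Qf0 Qg0] : Qf 0%N = 0 /\ Qg 0%N = 0 by [].
have Qf1 : Qf 1%N = 0 by rewrite /Qf zcover1_phiC /delta ifF ?mulr0 //; lia.
have Qf2 : Qf 2%N = a * psi`_s.
  rewrite /Qf zcover2_phiC {1}/delta ifF ?mulr0 ?add0r; last by lia.
  rewrite (@big_ord_only1 _ _ (fun j => psi`_j * (a * delta k s j)) s).
  - by rewrite /delta eqxx mulr1 mulrC.
  - by rewrite size_psi.
  by move=> l _ /negbTE neq_ls; rewrite /delta neq_ls !mulr0.
have Qf_deltar_low i : (i < s)%N -> hurwitz_mul Qf (delta k (s - 2)) i = 0.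
  move=> lt_is; rewrite hurwitz_mul_delta_r; case: ifP => // le.
  have [->|->] : (i - (s - 2) = 0 \/ i - (s - 2) = 1)%N by lia.
  - by rewrite Qf0 mul0rn.
  - by rewrite Qf1 mul0rn.
have deltal_Qg_low i : (i <= s)%N -> hurwitz_mul (delta k s) Qg i = 0.
  move=> le_is; rewrite hurwitz_mul_delta_l; case: ifP => // le.
  by rewrite (_ : (i - s = 0)%N) ?Qg0 ?mul0rn //; lia.
move: (RB (delta k s) (delta k (s - 2)) 2); rewrite -/Qf -/Qg.
rewrite hurwitz_mul2 Qf0 Qg0 Qf1 !mulr0 mul0r mul0rn !addr0.
rewrite !zcover2_phiC Qf_deltar_low ?deltal_Qg_low ?mulr0 ?add0r; try lia.
rewrite [X in _ = _ + X]big1 => [|j _]; last first.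
  by rewrite deltal_Qg_low ?mulr0 // -ltnS -size_psi.
rewrite (@big_ord_only1 _ _
   (fun j => psi`_j * (a * hurwitz_mul Qf (delta k (s - 2)) j)) s); first last.
- move=> l; rewrite size_psi => lt_ls /eqP neq_ls.
  by rewrite Qf_deltar_low ?mulr0 //; lia.
- by rewrite size_psi.
rewrite hurwitz_mul_delta_r ifT; last by lia.
rewrite (_ : (s - (s - 2) = 2)%N); last by lia.
rewrite Qf2 addr0 -mulr_natr => /esym/eqP; apply/negP.
have C_gt0 : (0 < 'C(s, s - 2))%N by rewrite bin_gt0; lia.
by rewrite mul0r !mulf_neq0 ?a_neq0 ?natr_neq0.
Qed.

End ConstantPhi.

Lemma not_RB0_zcover : phi != 0 -> psi != 0 -> ~ is_RB0_seq Q.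
Proof.
rewrite -!size_poly_gt0 => phi_gt0 psi_gt0.
have [phi_gt1 | phi_le1] := ltnP 1 (size phi).
  exact: not_RB0_zcover_phi_nonconst.
have size_phi : size phi = 1%N by lia.
have [psi_gt2 | psi_le2] := ltnP 2 (size psi).
  exact: not_RB0_zcover_psi_nonlinear.
have [size_psi | size_psi] : size psi = 1%N \/ size psi = 2%N by lia.
- exact: not_RB0_zcover_psi_const.
- exact: not_RB0_zcover_psi_linear.
Qed.

End ZeroCover.

Theorem proposition3p7 (k : idomainType) (hchar : [pchar k] =i pred0)
  (phi psi : {poly k}) (hphi : phi != 0) (hpsi : psi != 0) :
  exists (R : comAlgType k) (P : {linear R -> R}),
    is_RB0 P /\ ~ is_RB0_seq (omega_cover phi psi P).
Proof.
exists k^o, \0; split; first exact: is_RB0_zero.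
exact: not_RB0_zcover.
Qed.
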